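(* Let $(R,\mathfrak{m},k)$ be a local ring, let $R(k)$ be the trivial extension of $R$ by $k$, and let $M$, $N$ be nonzero, non-free, finitely generated $R(k)$-modules. Then $\mathrm{Tor}_n^{R(k)}(M,N)\neq 0$ for all $n\geq 3$.
   Context: All rings are commutative Noetherian with unity. For an $R$-module $M$, the trivial extension $R(M)$ is the ring whose underlying additive group is $R\oplus M$ with multiplication $(r,m)\cdot(r',m')=(rr',rm'+r'm)$. *)

From HB Require Import structures.
From mathcomp Require Import all_boot all_order all_algebra.
From mathcomp Require Import ring.
Set Implicit Arguments. Unset Strict Implicit. Unset Printing Implicit Defensive.
Import Order.TTheory GRing.Theory Num.Theory.
Local Open Scope ring_scope.

Definition is_ideal (R : comNzRingType) (I : R -> Prop) : Prop :=
  [/\ I 0, (forall x y, I x -> I y -> I (x + y)) & (forall r x, I x -> I (r * x))].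

Definition finitely_generated_ideal (R : comNzRingType) (I : R -> Prop) : Prop :=
  exists s : seq R, forall x, I x <->
     exists c : 'I_(size s) -> R, x = \sum_(i < size s) c i * s`_i.

Definition noetherian (R : comNzRingType) : Prop :=
  forall I : R -> Prop, is_ideal I -> finitely_generated_ideal I.

Definition proper_ideal (R : comNzRingType) (I : R -> Prop) : Prop :=
  is_ideal I /\ ~ I 1.

Definition maximal_ideal (R : comNzRingType) (I : R -> Prop) : Prop :=
  proper_ideal I /\
  forall J : R -> Prop, proper_ideal J -> (forall x, I x -> J x) -> forall x, J x -> I x.

Definition local_ring (R : comNzRingType) : Prop :=
  exists m : R -> Prop, maximal_ideal m /\
    forall m' : R -> Prop, maximal_ideal m' -> forall x, m' x <-> m x.

(* The trivial extension R(k) = R ⋉ k, where k is the residue field,   *)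
(* given as a field k with a surjective ring morphism pi : R -> k       *)
(* (so that k = R/ker pi = R/m when R is local).  k is an R-module via  *)
(* r . a = pi r * a.                                                    *)

Section TrivExt.
Variables (R : comNzRingType) (k : fieldType) (pi : {rmorphism R -> k}).

Definition triv_ext (p : {rmorphism R -> k}) : Type := (R * k)%type.
HB.instance Definition _ := GRing.Zmodule.copy (triv_ext pi) (R * k)%type.

Definition te_one : triv_ext pi := (1, 0).
Definition te_mul (x y : triv_ext pi) : triv_ext pi :=
  (x.1 * y.1, pi x.1 * y.2 + pi y.1 * x.2).

Lemma te_mulA : associative te_mul.
Proof.
move=> [r a] [s b] [t c]; rewrite /te_mul /=; congr (_, _); first by rewrite mulrA.
rewrite !rmorphM; ring.
Qed.

Lemma te_mulC : commutative te_mul.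
Proof. by move=> [r a] [s b]; rewrite /te_mul /= mulrC addrC. Qed.

Lemma te_mul1r : left_id te_one te_mul.
Proof. move=> [r a]; rewrite /te_mul /=; congr (_, _); first exact: mul1r.
rewrite rmorph1; ring. Qed.

Lemma te_mulDl : left_distributive te_mul +%R.
Proof.
move=> [r a] [s b] [t c]; rewrite /te_mul /=; congr (_, _); first by rewrite mulrDl.
rewrite rmorphD /=; ring.
Qed.

Lemma te_oner_neq0 : te_one != 0.
Proof. by apply/negP => /eqP [] /eqP; rewrite oner_eq0. Qed.

HB.instance Definition _ := GRing.Zmodule_isComNzRing.Build (triv_ext pi)
  te_mulA te_mulC te_mul1r te_mulDl te_oner_neq0.

End TrivExt.
Arguments triv_ext {R k} p.

Definition finitely_generated_module (S : comNzRingType) (M : lmodType S) : Prop :=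
  exists (n : nat) (g : 'I_n -> M),
    forall x : M, exists c : 'I_n -> S, x = \sum_(i < n) c i *: g i.

(* free (with a finite basis; a finitely generated free module over a
   nonzero commutative ring has a finite basis) *)
Definition free_module (S : comNzRingType) (M : lmodType S) : Prop :=
  exists (n : nat) (e : 'I_n -> M),
    forall x : M, exists! c : 'I_n -> S, x = \sum_(i < n) c i *: e i.

Definition nonzero_module (S : comNzRingType) (M : lmodType S) : Prop :=
  exists x : M, x != 0.

(* F_i = S^(b i) (row vectors), differential F_(i+1) -> F_i is          *)
(* u |-> u *m d i, augmentation F_0 -> M is u |-> \sum_j u_j *: eps j.   *)

Record free_resolution (S : comNzRingType) (M : lmodType S) := FreeRes {
  fr_rank : nat -> nat;
  fr_d : forall i : nat, 'M[S]_(fr_rank i.+1, fr_rank i);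
  fr_eps : 'I_(fr_rank 0) -> M
}.
Arguments fr_rank {S M} F i : rename.
Arguments fr_d {S M} F i : rename.
Arguments fr_eps {S M} F j : rename.

Definition fr_aug (S : comNzRingType) (M : lmodType S) (F : free_resolution M)
  (u : 'rV[S]_(fr_rank F 0)) : M :=
  \sum_(j < fr_rank F 0) u 0 j *: fr_eps F j.

Arguments fr_aug {S M} F u.

Definition is_free_resolution (S : comNzRingType) (M : lmodType S)
  (F : free_resolution M) : Prop :=
  [/\
      (forall x : M, exists u, fr_aug F u = x),
      (forall u : 'rV[S]_(fr_rank F 0),
         fr_aug F u = 0 <-> exists w, u = w *m fr_d F 0) &
      (forall (i : nat) (u : 'rV[S]_(fr_rank F i.+1)),
         u *m fr_d F i = 0 <-> exists w, u = w *m fr_d F i.+1)].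

(* F ⊗_S N in degree i is N^(fr_rank F i); the differential d_i ⊗ 1 *)
Definition tensor_d (S : comNzRingType) (M N : lmodType S)
  (F : free_resolution M) (i : nat)
  (x : 'I_(fr_rank F i.+1) -> N) : 'I_(fr_rank F i) -> N :=
  fun j => \sum_(l < fr_rank F i.+1) fr_d F i l j *: x l.

Arguments tensor_d {S M N} F {i} x j.

(* Tor_(n+1)^S(M, N) = H_(n+1)(F ⊗_S N) is nonzero *)
Definition tor_succ_nonzero (S : comNzRingType) (M N : lmodType S)
  (F : free_resolution M) (n : nat) : Prop :=
  exists x : 'I_(fr_rank F n.+1) -> N,
    (forall j, tensor_d F x j = 0) /\
    ~ (exists y : 'I_(fr_rank F n.+2) -> N, forall l, x l = tensor_d F y l).

Arguments tor_succ_nonzero {S M} N F n.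

(* Tor_n^S(M,N) <> 0 for n >= 1, computed with any free resolution of M
   (Tor does not depend on the resolution). *)
Definition Tor_nonzero (S : comNzRingType) (M N : lmodType S) (n : nat) : Prop :=
  forall F : free_resolution M, is_free_resolution F ->
    tor_succ_nonzero N F n.-1.

Arguments Tor_nonzero {S} M N n.

From Pilot Require Import Defs.
From HB Require Import structures.
From mathcomp Require Import all_boot all_order all_algebra ring.
From Stdlib Require Import Classical ClassicalEpsilon FunctionalExtensionality.
Set Implicit Arguments. Unset Strict Implicit. Unset Printing Implicit Defensive.
Import GRing.Theory.
Local Open Scope ring_scope.

(* Let [t = (0, 1)], which spans the socle of [S = R(k)] and is killed by its
   maximal ideal [m].  Call [v] in [F_(i+1)] a witness if [v D_i] lies in [m F_i]
   but [v] does not lie in [m F_(i+1) + Im D_(i+1)].  Then [t v] is a cycle, and any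
   [a] with [a D_(i+1) = t v] is again a witness; a witness in degree 1 exists as
   [M] is not free.  As [N] is not free, a minimal presentation [g] of [N] has a
   relation [c] with entries in [m] that is not an [m]-combination of relations.
   Every [c_q a] is then a boundary [W_q D_(i+2)], so [sum_q W_q (x) g_q] is a cycle
   of [F (x) N]; if it were a boundary, [c] would be an [m]-combination of relations
   because [a] is a witness. *)

Section TrivialExtension.
Variables (R : comNzRingType) (k : fieldType) (pi : {rmorphism R -> k}).
Local Notation S := (triv_ext pi).

Lemma te_eq (x y : S) : x.1 = y.1 -> x.2 = y.2 -> x = y.
Proof. by case: x y => [a b] [c d] /= -> ->. Qed.

Definition te_red (s : S) : k := pi s.1.

Lemma te_red_zmod_morphism : zmod_morphism te_red.
Proof. by move=> x y; rewrite /te_red /= rmorphB. Qed.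

Lemma te_red_monoid_morphism : monoid_morphism te_red.
Proof. by split=> [|x y]; rewrite /te_red /= (rmorph1, rmorphM). Qed.

HB.instance Definition _ := GRing.isZmodMorphism.Build S k te_red te_red_zmod_morphism.
HB.instance Definition _ := GRing.isMonoidMorphism.Build S k te_red te_red_monoid_morphism.

Definition te_soc : S := (0, 1).

Lemma te_socM (s : S) : te_soc * s = (0, te_red s).
Proof. by apply: te_eq; rewrite /= ?mul0r // rmorph0 mul0r add0r mulr1. Qed.

Lemma mul_te_soc (s : S) : s * te_soc = (0, te_red s).
Proof. by rewrite mulrC te_socM. Qed.

Lemma te_soc_ann (s : S) : te_red s = 0 -> s * te_soc = 0.
Proof. by move=> s0; rewrite mul_te_soc s0. Qed.

Definition te_inj (r : R) : S := (r, 0).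

Lemma te_inj_zmod_morphism : zmod_morphism te_inj.
Proof. by move=> x y; apply: te_eq; rewrite /= ?subr0. Qed.

Lemma te_inj_monoid_morphism : monoid_morphism te_inj.
Proof. by split=> // x y; apply: te_eq; rewrite //= !mulr0 addr0. Qed.

HB.instance Definition _ := GRing.isZmodMorphism.Build R S te_inj te_inj_zmod_morphism.
HB.instance Definition _ := GRing.isMonoidMorphism.Build R S te_inj te_inj_monoid_morphism.

Lemma snd_sum (I : Type) (r : seq I) (P : pred I) (f : I -> S) :
  (\sum_(i <- r | P i) f i).2 = \sum_(i <- r | P i) (f i).2.
Proof. by apply: (big_morph (fun x : S => x.2)). Qed.

End TrivialExtension.

Section NoetherianRing.
Variable R : comNzRingType.
Hypothesis R_noeth : noetherian R.

Lemma ideal_sum (J : R -> Prop) n (c s : 'I_n -> R) :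
  is_ideal J -> (forall i, J (s i)) -> J (\sum_(i < n) c i * s i).
Proof. by move=> [J0 JD JM] Js; apply: (big_ind J) => // i _; apply: JM. Qed.

Lemma fg_ideal_gen (I : R -> Prop) (s : seq R) :
  (forall x, I x <-> exists c : 'I_(size s) -> R, x = \sum_(i < size s) c i * s`_i) ->
  forall i : 'I_(size s), I s`_i.
Proof.
move=> hs i; apply/hs; exists (fun j => (j == i)%:R).
by rewrite (bigD1 i) //= eqxx mul1r big1 ?addr0 // => j /negbTE ->; rewrite mul0r.
Qed.

Lemma noetherian_chain_stationary (c : nat -> R -> Prop) :
  (forall n, is_ideal (c n)) -> (forall n x, c n x -> c n.+1 x) ->
  exists N, forall n x, c n x -> c N x.
Proof.
move=> c_id cS.
have cM n m x : (n <= m)%N -> c n x -> c m x.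
  by move/subnK <-; elim: (m - n)%N => [|d IH] // /IH; apply: cS.
pose U x := exists n, c n x.
have U_id : is_ideal U.
  split; first by exists 0%N; case: (c_id 0%N).
    move=> x y [n xn] [m ym]; exists (maxn n m); case: (c_id (maxn n m)) => _ D _.
    by apply: D; [apply: cM xn; apply: leq_maxl | apply: cM ym; apply: leq_maxr].
  by move=> r x [n xn]; exists n; case: (c_id n) => _ _; apply.
have [s hs] := R_noeth U_id.
have [ns hns] := fin_all_exists (fg_ideal_gen hs).
exists (\max_(i < size s) ns i)%N => n x cnx.
have /hs [a ->] : U x by exists n.
apply: ideal_sum => // i; apply: cM (hns i); exact: leq_bigmax.
Qed.

Lemma exists_maximal_ideal (I : R -> Prop) :
  Defs.proper_ideal I -> exists m, maximal_ideal m /\ forall x, I x -> m x.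
Proof.
move=> PI; apply: NNPP => nomax.
pose P J := Defs.proper_ideal J /\ (forall x, I x -> J x).
have grow J : exists J', P J ->
    [/\ P J', forall x, J x -> J' x & exists x, J' x /\ ~ J x].
  have [PJ|] := classic (P J); [|by exists J].
  have J_not_max : ~ (forall J', Defs.proper_ideal J' ->
      (forall x, J x -> J' x) -> forall x, J' x -> J x).
    move=> Jmax; apply: nomax; exists J.
    by split; [split; [exact: PJ.1 | exact: Jmax] | exact: PJ.2].
  have [J' nJ'] := not_all_ex_not _ _ J_not_max.
  have [pJ' nJ''] := imply_to_and _ _ nJ'.
  have [sJ nsJ] := imply_to_and _ _ nJ''.
  have [x nx] := not_all_ex_not _ _ nsJ.
  have [J'x nJx] := imply_to_and _ _ nx.
  exists J' => _; split => //; last by exists x.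
  by split => // y /PJ.2; apply: sJ.
have [f fP] := ClassicalEpsilon.choice _ grow.
pose c n := iter n f I.
have cP n : P (c n) by elim: n => [|n IH]; [split | rewrite /c iterS; case: (fP _ IH)].
have cS n x : c n x -> c n.+1 x.
  by rewrite /c iterS; case: (fP _ (cP n)) => _ sub _; apply: sub.
have [N cN] := noetherian_chain_stationary (fun n => (cP n).1.1) cS.
have [_ _ [x [fNx nNx]]] := fP _ (cP N).
by apply: nNx; apply: (cN N.+1); rewrite /c iterS.
Qed.

End NoetherianRing.

Lemma exists_rows (T : Type) m n (P : 'I_m -> 'rV[T]_n -> Prop) :
  (forall i, exists x, P i x) -> exists X : 'M[T]_(m, n), forall i, P i (row i X).
Proof. by case/fin_all_exists=> u hu; exists (\matrix_i u i) => i; rewrite rowK. Qed.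

Section RowSubmodules.
Variable A : comNzRingType.

Definition rV_submod m (K : 'rV[A]_m -> Prop) :=
  [/\ K 0, (forall x y, K x -> K y -> K (x + y)) & (forall a x, K x -> K (a *: x))].

Definition rV_fg m (K : 'rV[A]_m -> Prop) :=
  exists r (C : 'M[A]_(r, m)), forall v, K v <-> exists s, v = s *m C.

Lemma rV_submod_mul m r (K : 'rV[A]_m -> Prop) (C : 'M[A]_(r, m)) s :
  rV_submod K -> (forall i, K (row i C)) -> K (s *m C).
Proof.
move=> [K0 KD KZ] KC; rewrite mulmx_sum_row; apply: (big_ind K) => //.
by move=> i _; apply: KZ.
Qed.

Lemma rV_fg_gen m r (K : 'rV[A]_m -> Prop) (C : 'M[A]_(r, m)) :
  (forall v, K v <-> exists s, v = s *m C) -> forall i, K (row i C).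
Proof. by move=> hC i; apply/hC; exists (delta_mx 0 i); rewrite rowE. Qed.

(* The induction step of the Hilbert basis theorem. *)
Lemma rV_fg_split m (K : 'rV[A]_(1 + m) -> Prop) p (X : 'M_(p, 1 + m)) r (C : 'M_(r, m)) :
  rV_submod K -> (forall i, K (row i X)) ->
  (forall v, K v -> exists c : 'rV_p, lsubmx v = lsubmx (c *m X)) ->
  (forall y, K (row_mx 0 y) <-> exists s, y = s *m C) ->
  forall v, K v <-> exists s, v = s *m col_mx X (row_mx 0 C).
Proof.
move=> sK KX lead hC v; have [K0 KD KZ] := sK; split.
  move=> Kv; have [c hc] := lead v Kv.
  pose w := v - c *m X.
  have Kw : K w by apply: KD => //; rewrite -scaleN1r; apply: KZ; apply: rV_submod_mul.
  have lw : lsubmx w = 0 by rewrite linearB /= hc subrr.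
  have /hC [s hs] : K (row_mx 0 (rsubmx w)) by rewrite -lw hsubmxK.
  exists (row_mx c s); rewrite mul_row_col mul_mx_row mulmx0 -hs -lw hsubmxK.
  by rewrite /w addrC subrK.
move=> [s ->]; apply: rV_submod_mul => // i.
rewrite -(splitK i); case: (split i) => j /=; first by rewrite rowKu.
by rewrite rowKd row_row_mx row0; apply: (rV_fg_gen hC).
Qed.

Lemma noetherian_rV_fg m (K : 'rV[A]_m -> Prop) :
  noetherian A -> rV_submod K -> rV_fg K.
Proof.
move=> A_noeth; elim: m K => [|m IH] K sK.
  exists 0%N, 0 => v; rewrite (thinmx0 v); split=> [_|_]; last by case: sK.
  by exists 0; rewrite mulmx0.
have [K0 KD KZ] := sK.
pose I a := exists v, K v /\ lsubmx (v : 'rV_(1 + m)) 0 0 = a.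
have I_id : is_ideal I.
  split; first by exists 0; rewrite linear0 mxE.
    move=> _ _ [v [Kv <-]] [w [Kw <-]].
    by exists (v + w); rewrite linearD mxE; split => //; apply: KD.
  by move=> a _ [v [Kv <-]]; exists (a *: v); rewrite linearZ mxE; split => //; apply: KZ.
have [s hs] := A_noeth I I_id.
have [X hX] := exists_rows (fg_ideal_gen hs).
have sK' : rV_submod (fun y : 'rV_m => K (row_mx (0 : 'rV_1) y)).
  split; first by rewrite row_mx0.
    by move=> x y; rewrite -{3}(addr0 0) -add_row_mx; apply: KD.
  by move=> a x; rewrite -{2}(scaler0 _ a) -scale_row_mx; apply: KZ.
have [r [C hC]] := IH _ sK'.
exists (size s + r)%N, (col_mx X (row_mx (0 : 'M_(r, 1)) C) : 'M_(_, 1 + m)).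
apply: rV_fg_split => // [i|v Kv].
  by case: (hX i).
have /hs [c hc] : I (lsubmx v 0 0) by exists v.
exists (\row_i c i); apply/rowP => j; rewrite (ord1 j) hc -mulmx_lsub !mxE.
by apply: eq_bigr => i _; case: (hX i) => _ <-; rewrite !mxE mulrC.
Qed.

End RowSubmodules.

Section LocalResidue.
Variables (R : comNzRingType) (k : fieldType) (pi : {rmorphism R -> k}).
Hypotheses (R_noeth : noetherian R) (R_local : local_ring R)
  (pi_surj : forall a : k, exists r : R, pi r = a).
Local Notation S := (triv_ext pi).
Local Notation redm A := (map_mx (@te_red _ _ pi) A).

Lemma ker_maximal : maximal_ideal (fun x : R => pi x = 0).
Proof.
split.
  split; last by rewrite rmorph1; apply/eqP; apply: oner_neq0.
  split=> [|x y hx hy|r x hx]; first exact: rmorph0.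
    by rewrite rmorphD hx hy addr0.
  by rewrite rmorphM hx mulr0.
move=> J [[J0 JD JM] nJ1] sub x Jx; apply: NNPP => px.
have [y hy] := pi_surj (pi x)^-1.
have J1 : J (y * x - 1).
  by apply: sub; rewrite rmorphB rmorphM hy rmorph1 mulVf ?subrr //; apply/eqP.
apply: nJ1; have -> : (1 : R) = y * x + (-1) * (y * x - 1) by ring.
by apply: JD; apply: JM.
Qed.

Lemma local_unit (r : R) : pi r != 0 -> exists r', r' * r = 1.
Proof.
move=> pr; apply: NNPP => nu.
have I_proper : Defs.proper_ideal (fun x => exists y, x = y * r).
  split; last by move=> [y hy]; apply: nu; exists y.
  split; first by exists 0; rewrite mul0r.
    by move=> _ _ [a ->] [b ->]; exists (a + b); rewrite mulrDl.
  by move=> s _ [a ->]; exists (s * a); rewrite mulrA.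
have [m [m_max Im]] := exists_maximal_ideal R_noeth I_proper.
have [m0 [_ m0_uniq]] := R_local.
have /(m0_uniq _ m_max) : m r by apply: Im; exists 1; rewrite mul1r.
by move/(m0_uniq _ ker_maximal); apply/eqP.
Qed.

Lemma te_unit (s : S) : te_red s != 0 -> exists s', s' * s = 1.
Proof.
move=> ps; have [r' hr'] := local_unit ps.
have e : pi r' * pi s.1 = 1 by rewrite -rmorphM hr' rmorph1.
exists (r', - (pi r' * pi r' * s.2)); apply: te_eq => //=.
transitivity (pi r' * s.2 * (1 - pi r' * pi s.1)); first by ring.
by rewrite e subrr mulr0.
Qed.

(* Nakayama's lemma in determinant form: [1 - E] is invertible when [E] vanishes
   modulo the maximal ideal. *)
Lemma red0_cancel n m (E : 'M[S]_n) (C : 'M[S]_(n, m)) :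
  redm E = 0 -> (1%:M - E) *m C = 0 -> C = 0.
Proof.
move=> E0 h; have [d hd] : exists d, d * \det (1%:M - E) = 1.
  by apply: te_unit; rewrite -det_map_mx map_mxB map_mx1 E0 subr0 det1 oner_neq0.
have inv : (d *: \adj (1%:M - E)) *m (1%:M - E) = 1%:M.
  by rewrite -scalemxAl mul_adj_mx scale_scalar_mx hd.
by rewrite -[C]mul1mx -inv -mulmxA h mulmx0.
Qed.

Definition res_lift (a : k) : R :=
  proj1_sig (constructive_indefinite_description _ (pi_surj a)).

Lemma res_liftK a : pi (res_lift a) = a.
Proof. exact: proj2_sig (constructive_indefinite_description _ (pi_surj a)). Qed.

Definition te_lift (a : k) : S := te_inj pi (res_lift a).

Lemma redm_lift m n (Z : 'M[k]_(m, n)) : redm (map_mx te_lift Z) = Z.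
Proof. by apply/matrixP => i j; rewrite !mxE /te_red /= res_liftK. Qed.

(* Some coordinate of [a Phi], for [Phi] a lift of the cokernel of [A] modulo
   [m], is a unit; taking that column of [A Phi] turns [a^T c] into [c]. *)
Lemma outer_factor_mod_m m n p (A : 'M[S]_(m, n)) (a : 'rV[S]_n) (P : 'M[S]_(m, p)) c :
  ~ (exists z, redm (a - z *m A) = 0) -> A^T *m P = a^T *m c ->
  exists E : 'rV[S]_m, redm E = 0 /\ c = E *m P.
Proof.
move=> a_new AP; pose Phi := map_mx te_lift (cokermx (redm A)).
have : redm a *m cokermx (redm A) != 0.
  rewrite -submxE; apply/negP => /submxP [Z hZ]; apply: a_new.
  by exists (map_mx te_lift Z); rewrite map_mxB map_mxM redm_lift hZ subrr.
case: (pickP (fun jj => (redm a *m cokermx (redm A)) 0 jj != 0)) => [jj aPhi _|all0].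
  have [mu hmu] : exists mu, mu * (a *m Phi) 0 jj = 1.
    apply: te_unit; rewrite (_ : te_red _ = (redm (a *m Phi)) 0 jj) ?[RHS]mxE //.
    by rewrite map_mxM redm_lift.
  have APhi0 : redm (A *m Phi) = 0 by rewrite map_mxM redm_lift mulmx_coker.
  exists (mu *: row jj (A *m Phi)^T).
  rewrite map_mxZ map_row -map_trmx APhi0 trmx0 row0 scaler0; split=> //.
  rewrite -scalemxAl -row_mul trmx_mul -mulmxA AP mulmxA -trmx_mul row_mul.
  have -> : row jj (a *m Phi)^T *m c = (a *m Phi) 0 jj *: c.
    by apply/rowP => q; rewrite !mxE big_ord1 !mxE.
  by rewrite scalerA hmu scale1r.
by case/negP; apply/eqP/rowP => jj; rewrite [RHS]mxE; apply/eqP/negbFE/all0.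
Qed.

(* Since [pi] is onto, every row over [S] is [te_mx] of a row over [R] of twice
   the length, and [te_mx] is [R]-linear. *)
Definition te_mx r p (C : 'M[R]_(r, p + p)) : 'M[S]_(r, p) :=
  map_mx (te_inj pi) (lsubmx C) + te_soc pi *: map_mx (te_inj pi) (rsubmx C).

Lemma te_mx_mul r r' p (s : 'M[R]_(r', r)) (C : 'M[R]_(r, p + p)) :
  te_mx (s *m C) = map_mx (te_inj pi) s *m te_mx C.
Proof. by rewrite /te_mx mulmxDr -mulmx_lsub -mulmx_rsub !map_mxM scalemxAr. Qed.

Lemma te_rV_fg p (K : 'rV[S]_p -> Prop) : rV_submod K -> rV_fg K.
Proof.
move=> [K0 KD KZ].
have sKR : rV_submod (fun u : 'rV[R]_(p + p) => K (te_mx u)).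
  split.
  - by rewrite /te_mx !linear0 !map_mx0 scaler0 addr0.
  - by move=> x y; rewrite /te_mx !linearD !map_mxD scalerDr addrACA; apply: KD.
  - move=> a x; rewrite /te_mx !linearZ !map_mxZ /= scalerA mulrC -scalerA -scalerDr.
    exact: KZ.
have [r [C hC]] := noetherian_rV_fg R_noeth sKR.
exists r, (te_mx C) => v; split.
  move=> Kv; pose u := row_mx (\row_j (v 0 j).1) (\row_j res_lift (v 0 j).2).
  have uv : te_mx u = v.
    apply/rowP => j; rewrite /te_mx /u row_mxKl row_mxKr !mxE.
    by apply: te_eq => /=; rewrite ?mul0r ?addr0 // rmorph0 mul0r !add0r mulr1 res_liftK.
  have /hC [s hs] : K (te_mx u) by rewrite uv.
  by exists (map_mx (te_inj pi) s); rewrite -te_mx_mul -hs uv.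
move=> [s ->]; apply: rV_submod_mul => // i.
have -> : row i (te_mx C) = te_mx (row i C) by apply/rowP => j; rewrite !mxE.
exact: (rV_fg_gen hC).
Qed.

End LocalResidue.

Lemma classical_ex_min (P : nat -> Prop) :
  (exists n, P n) -> exists n, P n /\ forall m, (m < n)%N -> ~ P m.
Proof.
move=> [n Pn]; apply: NNPP => nomin; elim/ltn_ind: n Pn => n IH Pn.
by apply: nomin; exists n; split=> // m /IH.
Qed.

Section Presentation.
Variables (R : comNzRingType) (k : fieldType) (pi : {rmorphism R -> k}).
Local Notation S := (triv_ext pi).
Local Notation redm A := (map_mx (@te_red _ _ pi) A).
Variable X : lmodType S.

Section Lincomb.
Variables (p : nat) (g : 'I_p -> X).

Definition lincomb (v : 'rV[S]_p) : X := \sum_q v 0 q *: g q.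

Lemma lincomb_is_linear : linear lincomb.
Proof.
move=> a v w; rewrite /lincomb scaler_sumr -big_split /=.
by apply: eq_bigr => q _; rewrite !mxE scalerDl scalerA.
Qed.

HB.instance Definition _ :=
  GRing.isLinear.Build S 'rV[S]_p X *:%R lincomb lincomb_is_linear.

Lemma lincomb_mul r (u : 'rV[S]_r) (C : 'M[S]_(r, p)) :
  lincomb (u *m C) = \sum_i u 0 i *: lincomb (row i C).
Proof. by rewrite mulmx_sum_row linear_sum; apply: eq_bigr => i _; rewrite linearZ. Qed.

Lemma lincomb_delta q : lincomb (delta_mx 0 q) = g q.
Proof.
rewrite /lincomb (bigD1 q) //= mxE !eqxx scale1r big1 ?addr0 // => q' nq.
by rewrite mxE (negbTE nq) andbF scale0r.
Qed.

Definition generates := forall x, exists v, x = lincomb v.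

Definition is_rel (v : 'rV[S]_p) := lincomb v = 0.

(* [c] lies in [m * Syz(g)]: it is an [m]-combination of relations. *)
Definition in_m_rels (c : 'rV[S]_p) :=
  exists L (E : 'rV[S]_L) (P : 'M[S]_(L, p)),
    [/\ redm E = 0, (forall l, is_rel (row l P)) & c = E *m P].

Lemma is_rel_submod : rV_submod is_rel.
Proof.
split=> [|x y|a x]; rewrite /is_rel ?linear0 ?linearD ?linearZ //=.
  by move=> -> ->; rewrite addr0.
by move=> ->; rewrite scaler0.
Qed.

Definition tens n (W : 'M[S]_(p, n)) : 'I_n -> X := fun l => lincomb (row l W^T).

Lemma tens_outer_rel n c (a : 'rV[S]_n) l : is_rel c -> tens (c^T *m a) l = 0.
Proof.
move=> rel_c; rewrite /tens trmx_mul trmxK row_mul.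
have -> : row l a^T *m c = a 0 l *: c by apply/rowP => q; rewrite !mxE big_ord1 !mxE.
by rewrite linearZ /= rel_c scaler0.
Qed.

End Lincomb.

Hypotheses (R_noeth : noetherian R) (R_local : local_ring R)
  (pi_surj : forall a : k, exists r : R, pi r = a).

Lemma rel_unit_coef_redundant p (g : 'I_p -> X) v q :
  generates g -> is_rel g v -> te_red (v 0 q) != 0 ->
  generates (fun i : 'I_p.-1 => g (lift q i)).
Proof.
move=> gen rel vq x; have [u hu] := te_unit R_noeth R_local pi_surj vq.
have gq : g q = - (u *: \sum_(i < p.-1) v 0 (lift q i) *: g (lift q i)).
  move: rel; rewrite /is_rel /lincomb (bigD1_ord q) //= => /eqP.
  by rewrite addr_eq0 => /eqP h; rewrite -scalerN -h scalerA hu scale1r.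
have [c ->] := gen x.
exists (\row_i (c 0 (lift q i) - c 0 q * u * v 0 (lift q i))).
rewrite /lincomb (bigD1_ord q) //= gq scalerN scalerA scaler_sumr -sumrN -big_split /=.
by apply: eq_bigr => i _; rewrite !mxE scalerA scalerBl addrC.
Qed.

Lemma free_of_no_rel p (g : 'I_p -> X) :
  generates g -> (forall c, is_rel g c -> c = 0) -> free_module X.
Proof.
move=> gen no_rel; exists p, g => x; have [v ->] := gen x.
exists (fun i => v 0 i); split=> [|c' hc']; first by [].
have /no_rel /eqP : is_rel g (v - \row_i c' i).
  rewrite /is_rel linearB /= hc'; apply/eqP; rewrite subr_eq0; apply/eqP/eq_bigr => i _.
  by rewrite mxE.
by rewrite subr_eq0 => /eqP ->; apply: functional_extensionality => i; rewrite mxE.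
Qed.

Lemma rels_in_m_rels_eq0 p (g : 'I_p -> X) :
  (forall c, is_rel g c -> in_m_rels g c) -> forall c, is_rel g c -> c = 0.
Proof.
move=> all_m c rel_c.
have [r [C hC]] := te_rV_fg R_noeth pi_surj (is_rel_submod g).
have hrow (rho : 'I_r) : exists w : 'rV[S]_r, redm w = 0 /\ row rho C = w *m C.
  have [L [E [P [E0 relP ->]]]] := all_m _ (rV_fg_gen hC rho).
  have [Y hY] := exists_rows (fun l => (hC (row l P)).1 (relP l)).
  exists (E *m Y); rewrite map_mxM E0 mul0mx -mulmxA; split=> //; congr (_ *m _).
  by apply/row_matrixP => l; rewrite row_mul hY.
have [Xi hXi] := exists_rows hrow.
have Xi0 : redm Xi = 0.
  by apply/matrixP => i j; case: (hXi i) => /matrixP /(_ 0 j); rewrite !mxE.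
have C0 : C = 0.
  apply: (red0_cancel R_noeth R_local pi_surj Xi0); rewrite mulmxBl mul1mx.
  apply/eqP; rewrite subr_eq0; apply/eqP/row_matrixP => rho.
  by rewrite row_mul; case: (hXi rho).
by have [s ->] := (hC c).1 rel_c; rewrite C0 mulmx0.
Qed.

(* [g] is a generating family of minimal size. *)
Lemma nonfree_min_presentation :
  finitely_generated_module X -> ~ free_module X ->
  exists p (g : 'I_p -> X), [/\ generates g, (forall v, is_rel g v -> redm v = 0) &
     exists c, is_rel g c /\ ~ in_m_rels g c].
Proof.
move=> [n [g0 hg0]] nfree.
have : exists p (g : 'I_p -> X), generates g.
  exists n, g0 => x; have [c ->] := hg0 x; exists (\row_i c i).
  by apply: eq_bigr => i _; rewrite mxE.
case/classical_ex_min => p [[g gen] pmin]; exists p, g; split=> // [v rel|].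
  apply/matrixP => i q; rewrite (ord1 i) !mxE.
  have [//|vq] := eqVneq (te_red (v 0 q)) 0.
  have p_gt : (p.-1 < p)%N by rewrite ltn_predL (leq_ltn_trans _ (ltn_ord q)).
  by case: (pmin _ p_gt); exists (fun i => g (lift q i)); apply: rel_unit_coef_redundant vq.
apply: NNPP => all_m; apply: nfree; apply: (free_of_no_rel gen).
apply: rels_in_m_rels_eq0 => c rel_c; apply: NNPP => nm.
by apply: all_m; exists c.
Qed.

End Presentation.

Section Resolution.
Variables (R : comNzRingType) (k : fieldType) (pi : {rmorphism R -> k}).
Hypotheses (R_noeth : noetherian R) (R_local : local_ring R)
  (pi_surj : forall a : k, exists r : R, pi r = a).
Local Notation S := (triv_ext pi).
Local Notation redm A := (map_mx (@te_red _ _ pi) A).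
Variables (M : lmodType S) (F : free_resolution M).
Hypothesis F_res : is_free_resolution F.
Local Notation D := (fr_d F).

Lemma fr_dd0 i : D i.+1 *m D i = 0.
Proof.
case: F_res => _ _ exact_F; apply/row_matrixP => l; rewrite row_mul row0.
by apply/(exact_F i); exists (delta_mx 0 l); rewrite rowE.
Qed.

Definition fr_witness i (v : 'rV[S]_(fr_rank F i.+1)) :=
  redm (v *m D i) = 0 /\ ~ exists z, redm (v - z *m D i.+1) = 0.

Lemma fr_witness_succ i (v : 'rV_(fr_rank F i.+1)) : fr_witness v ->
  exists a, a *m D i.+1 = te_soc pi *: v /\ fr_witness a.
Proof.
move=> [v_m v_new]; case: F_res => _ _ exact_F.
have /exact_F [a ha] : (te_soc pi *: v) *m D i = 0.
  apply/rowP => j; rewrite -scalemxAl !mxE te_socM.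
  by move/matrixP: v_m => /(_ 0 j); rewrite !mxE => ->.
exists a; split=> //; split.
  by apply/matrixP => x y; rewrite -ha !mxE te_socM /te_red /= rmorph0.
move=> [z hz]; apply: v_new; pose a' := a - z *m D i.+2.
have ha' : a' *m D i.+1 = te_soc pi *: v.
  by rewrite mulmxBl -mulmxA fr_dd0 mulmx0 subr0 ha.
have a'_m l : pi (a' 0 l).1 = 0.
  by have /matrixP /(_ 0 l) : redm a' = 0 by []; rewrite !mxE.
clearbody a'.
have v_soc j : te_red (v 0 j) = \sum_l (a' 0 l * D i.+1 l j).2.
  have /(congr1 snd) : (a' *m D i.+1) 0 j = (te_soc pi *: v) 0 j by rewrite ha'.
  by rewrite !mxE snd_sum /= rmorph0 mul0r add0r mulr1 => ->.
exists (\row_l te_lift pi_surj (a' 0 l).2); apply/rowP => j; rewrite !mxE.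
rewrite rmorphB /= v_soc rmorph_sum -sumrB big1 // => l _; rewrite !mxE rmorphM /=.
by rewrite /te_red /= res_liftK a'_m mul0r add0r mulrC subrr.
Qed.

Lemma fr_witness_base : finitely_generated_module M -> ~ free_module M ->
  exists v : 'rV_(fr_rank F 1), fr_witness v.
Proof.
move=> M_fg M_nfree; case: F_res => aug_onto aug_exact _.
have [p [g [gen rel_m [c [rel_c c_nm]]]]] :=
  nonfree_min_presentation R_noeth R_local pi_surj M_fg M_nfree.
have [B hB] := exists_rows (fun q => aug_onto (g q)).
have [A hA] := exists_rows (fun j => gen (fr_eps F j)).
have augA u : lincomb g (u *m A) = fr_aug F u.
  by rewrite lincomb_mul; apply: eq_bigr => j _; rewrite -hA.
have /(aug_exact _).1 [w hw] : fr_aug F (c *m B) = 0.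
  rewrite [fr_aug F _]lincomb_mul -[RHS]rel_c; apply: eq_bigr => q _.
  by rewrite -[lincomb _ _]/(fr_aug F _) hB.
exists w; split; first by rewrite -hw map_mxM (rel_m c rel_c) mul0mx.
move=> [z hz]; apply: c_nm; pose e := w - z *m fr_d F 1.
have he : e *m fr_d F 0 = c *m B by rewrite mulmxBl -mulmxA fr_dd0 mulmx0 subr0 hw.
exists (fr_rank F 1 + p)%N, (row_mx e (- c)), (col_mx (fr_d F 0 *m A) (B *m A - 1%:M)).
split.
- by rewrite map_row_mx hz map_mxN (rel_m c rel_c) oppr0 row_mx0.
- move=> l; rewrite -(splitK l); case: (split l) => l' /=.
    rewrite rowKu /is_rel row_mul augA; apply/aug_exact.
    by exists (delta_mx 0 l'); rewrite rowE.
  by rewrite rowKd /is_rel !linearB /= row_mul augA hB rowE mulmx1 lincomb_delta subrr.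
- by rewrite mul_row_col mulmxA he mulNmx mulmxBr mulmx1 mulmxA opprB addrC subrK.
Qed.

Lemma fr_witness_exists j : finitely_generated_module M -> ~ free_module M ->
  exists v : 'rV_(fr_rank F j.+1), fr_witness v.
Proof.
move=> M_fg M_nfree; elim: j => [|j [v /fr_witness_succ [a [_ wa]]]].
  exact: fr_witness_base.
by exists a.
Qed.

Lemma tensor_d_tens (N : lmodType S) p (g : 'I_p -> N) i (W : 'M_(p, fr_rank F i.+1)) j :
  tensor_d F (tens g W) j = tens g (W *m D i) j.
Proof.
rewrite /tensor_d /tens trmx_mul row_mul lincomb_mul.
by apply: eq_bigr => l _; rewrite !mxE.
Qed.

Lemma tor_nonzero_of_witness (N : lmodType S) j (a : 'rV_(fr_rank F j.+2)) :
  (forall s, te_red s = 0 -> (s *: a) *m D j.+1 = 0) ->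
  ~ (exists z, redm (a - z *m D j.+2) = 0) ->
  finitely_generated_module N -> ~ free_module N -> tor_succ_nonzero N F j.+2.
Proof.
move=> a_soc a_new N_fg N_nfree; case: F_res => _ _ exact_F.
have [p [g [gen rel_m [c [rel_c c_nm]]]]] :=
  nonfree_min_presentation R_noeth R_local pi_surj N_fg N_nfree.
have c_m q : te_red (c 0 q) = 0.
  by have /matrixP /(_ 0 q) := rel_m c rel_c; rewrite !mxE.
have [W hW] := exists_rows (fun q => (exact_F _ _).1 (a_soc _ (c_m q))).
have WD : W *m D j.+2 = c^T *m a.
  apply/row_matrixP => q; rewrite !row_mul -hW.
  by apply/rowP => l; rewrite !mxE big_ord1 !mxE.
exists (tens g W); split=> [l|[y hy]].
  by rewrite tensor_d_tens WD tens_outer_rel.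
apply: c_nm; have [Y hY] := exists_rows (fun l => gen (y l)).
pose P := (W - Y^T *m D j.+3)^T.
have relP l : is_rel g (row l P).
  rewrite /is_rel /P !linearB /= -[lincomb g (row l W^T)]/(tens g W l) hy.
  rewrite -[lincomb g _]/(tens g _ l) -tensor_d_tens; apply/eqP; rewrite subr_eq0.
  apply/eqP/eq_bigr => m _.
  by rewrite /tens trmxK -hY.
have DP : (D j.+2)^T *m P = a^T *m c.
  by rewrite /P -trmx_mul mulmxBl -mulmxA fr_dd0 mulmx0 subr0 WD trmx_mul trmxK.
have [E [E0 ->]] := outer_factor_mod_m R_noeth R_local pi_surj a_new DP.
by exists _, E, P.
Qed.

End Resolution.

Theorem theorem3p1 (R : comNzRingType) (k : fieldType) (pi : {rmorphism R -> k})
  (hnoeth : noetherian R) (hloc : local_ring R) (hpi : forall a : k, exists r : R, pi r = a)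
  (M N : lmodType (triv_ext pi))
  (hMfg : finitely_generated_module M) (hNfg : finitely_generated_module N)
  (hM0 : nonzero_module M) (hN0 : nonzero_module N)
  (hMfree : ~ free_module M) (hNfree : ~ free_module N) :
  forall n : nat, (3 <= n)%N -> Tor_nonzero M N n.
Proof.
move=> n n_ge3 F F_res; have [j ->] : exists j, n = j.+3.
  by exists (n - 3)%N; rewrite -addn3 subnK.
have [v /(fr_witness_succ hpi F_res) [a [va [_ a_new]]]] :=
  fr_witness_exists hnoeth hloc hpi F_res j hMfg hMfree.
apply: (tor_nonzero_of_witness hnoeth hloc hpi F_res _ a_new hNfg hNfree) => s s_m.
by rewrite -scalemxAl va scalerA te_soc_ann // scale0r.
Qed.
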